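(* Let $T$ be a tree with root edge whose leaves are $1,\dots,m$, and let $L:G\to\mathcal{L}$ be a labeling function on a finite abelian group $G$. Let $J_{T,L}$ be the kernel of the $\mathbb{C}$-algebra homomorphism $$\mathbb{C}[q_{g}: g=(g_1,\dots,g_m)\in G^m]\to\mathbb{C}[a^{(e)}_l: e\in E(T),\, l\in\mathcal{L}],\qquad q_{g}\mapsto\prod_{e\in E(T)}a^{(e)}_{L(h_g(e))}.$$ Then the $\mathbb{C}$-vector space of polynomials of degree at most one lying in $J_{T,L}$ is spanned by all differences $q_{g}-q_{g'}$ with $g,g'\in G^m$ such that $L(h_g(e))=L(h_{g'}(e))$ for all edges $e\in E(T)$.
   Context: Let $G$ be a finite abelian group written additively, $\mathcal{L}$ a finite set, and $L:G\to\mathcal{L}$ any function (a labeling function). A tree with root edge is a finite tree $T$ with a distinguished leaf $\rho$; the unique edge $e_r$ at $\rho$ is the root edge. Every vertex $v\neq\rho$ has a unique parent edge (the first edge on the path from $v$ to $\rho$); the other edges at $v$ are its child edges. The leaves of $T$ other than $\rho$ are called the leaves of $T$; vertices that are neither $\rho$ nor leaves are interior vertices. $E(T)$ is the edge set. An edge $e'$ is below an edge $e$ if $e$ lies on the path from $\rho$ to $e'$ (in particular $e$ is below $e$). For $g=(g_1,\dots,g_m)\in G^m$, define $h_g:E(T)\to G$ by $h_g(e)=\sum_{i\in\Lambda(e)}g_i$, where $\Lambda(e)$ is the set of leaves $i$ whose incident edge is below $e$. All $a^{(e)}_l$ are distinct indeterminates. *)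

From HB Require Import structures.
From mathcomp Require Import all_boot all_order all_algebra.
From mathcomp Require Import multinomials.mpoly.
Set Implicit Arguments. Unset Strict Implicit. Unset Printing Implicit Defensive.
Import GRing.Theory.
Local Open Scope ring_scope.

(* A tree with root edge, encoded by its vertex set V, its root leaf [rho] and
   the parent map [par] (par v = the other endpoint of the parent edge of v,
   for v <> rho; by convention par rho = rho). *)
Definition is_tree_with_root_edge (V : finType) (rho : V) (par : V -> V) : Prop :=
  [/\ par rho = rho,
      (forall v : V, fconnect par v rho) &
      (* rho is a leaf: exactly one vertex has rho as its parent-neighbour *)
      #|[set v | (v != rho) && (par v == rho)]| = 1%N ].

(* Edges of T: an edge is identified with its lower endpoint v <> rho;
   the edge e_v joins v and par v. *)
Definition tedge (V : finType) (rho : V) := {v : V | v != rho}.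

Definition is_leaf (V : finType) (rho : V) (par : V -> V) (v : V) : bool :=
  (v != rho) && [forall w, (w != rho) ==> (par w != v)].

Definition leaf_labeling (V : finType) (rho : V) (par : V -> V) (m : nat)
    (leaf : 'I_m -> V) : Prop :=
  injective leaf /\ (forall v, is_leaf rho par v <-> exists i, leaf i = v).

(* The edge e_w is below e_v iff v lies on the path from w to rho,
   i.e. v is reached from w by iterating par. *)
Definition below (V : finType) (par : V -> V) (v w : V) : bool := fconnect par w v.

Definition hg (V : finType) (rho : V) (par : V -> V) (m : nat) (leaf : 'I_m -> V)
    (G : zmodType) (g : {ffun 'I_m -> G}) (e : tedge rho) : G :=
  \sum_(i < m | below par (val e) (leaf i)) g i.

Definition qidx (m : nat) (G : finZmodType) := {ffun 'I_m -> G}.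
Definition aidx (V : finType) (rho : V) (Lab : finType) := (tedge rho * Lab)%type.

Definition qvar (F : fieldType) (m : nat) (G : finZmodType) (g : qidx m G)
  : {mpoly F[#|{: qidx m G}|]} := 'X_(enum_rank g).

Definition avar (F : fieldType) (V : finType) (rho : V) (Lab : finType)
    (e : tedge rho) (l : Lab) : {mpoly F[#|{: aidx rho Lab}|]} :=
  'X_(enum_rank ((e, l) : aidx rho Lab)).

Definition qimage (F : fieldType) (V : finType) (rho : V) (par : V -> V) (m : nat)
    (leaf : 'I_m -> V) (G : finZmodType) (Lab : finType) (L : G -> Lab)
    (g : qidx m G) : {mpoly F[#|{: aidx rho Lab}|]} :=
  \prod_(e : tedge rho) avar F e (L (hg par leaf g e)).

Definition phiTL (F : fieldType) (V : finType) (rho : V) (par : V -> V) (m : nat)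
    (leaf : 'I_m -> V) (G : finZmodType) (Lab : finType) (L : G -> Lab)
    (p : {mpoly F[#|{: qidx m G}|]}) : {mpoly F[#|{: aidx rho Lab}|]} :=
  mmap (fun c : F => c%:MP)
       (fun i => qimage F rho par leaf L (enum_val i)) p.

Definition same_labels (V : finType) (rho : V) (par : V -> V) (m : nat)
    (leaf : 'I_m -> V) (G : finZmodType) (Lab : finType) (L : G -> Lab)
    (g g' : qidx m G) : bool :=
  [forall e : tedge rho, L (hg par leaf g e) == L (hg par leaf g' e)].

Arguments phiTL F {V} rho par {m} leaf {G Lab} L p.
Arguments qimage F {V} rho par {m} leaf {G Lab} L g.
Arguments same_labels {V} rho par {m} leaf {G Lab} L g g'.
Arguments qvar F {m G} g.

From HB Require Import structures.
From mathcomp Require Import all_boot all_order all_algebra.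
From mathcomp Require Import multinomials.mpoly.
Set Implicit Arguments. Unset Strict Implicit. Unset Printing Implicit Defensive.
Import GRing.Theory.
Local Open Scope ring_scope.

(* Each q_g is sent to a single monomial, the product of the a^(e)_{L(h_g(e))},
   and two variables have the same image iff their labels agree on every edge.
   A polynomial c + sum_g c_g q_g of degree at most one is therefore mapped to
   c + sum_mu (sum_{g in the fibre of mu} c_g) a^mu; as the monomials are
   non-constant (T has at least one edge), it lies in the kernel iff c = 0 and
   the coefficients over each fibre sum to zero, i.e. iff it is a combination
   of differences q_g - q_g' inside the fibres. *)

Section MonomialMapKernel.

Variables (F : fieldType) (K : finType) (k : nat).
Variables (mu : K -> 'X_{1.. k}) (img : K -> {mpoly F[k]}).
Hypothesis imgE : forall g, img g = 'X_[mu g].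
Hypothesis mu_neq0 : forall g, mu g != 0%MM.

Local Notation n := #|{: K}|.
Local Notation X g := ('X_(enum_rank g) : {mpoly F[n]}).
Local Notation phi := (mmap (@mpolyC _ F) (fun i => img (enum_val i))).

Lemma msize_le2E (p : {mpoly F[n]}) : (msize p <= 2)%N ->
  p = (p@_0%MM)%:MP + \sum_(g : K) p@_(U_(enum_rank g)) *: X g.
Proof.
move=> size_p; apply/mpolyP => mm.
rewrite mcoeffD mcoeffC raddf_sum /=.
under eq_bigr => g _ do rewrite mcoeffZ mcoeffX.
have [->|mm_neq0] := eqVneq mm 0%MM.
  by rewrite mulr1n mulr1 big1 ?addr0 // => g _; rewrite mnm1_eq0 mulr0n mulr0.
rewrite mulr0n mulr0 add0r.
have [/mdeg1P [i /eqP ->]|deg_neq1] := boolP (mdeg mm == 1%N).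
  rewrite (bigD1 (enum_val i)) //= enum_valK eqxx mulr1 big1 ?addr0 // => g ne_g.
  by rewrite eq_mnm1 -(inj_eq enum_val_inj) enum_rankK (negbTE ne_g) mulr0.
have deg_ge2 : (2 <= mdeg mm)%N.
  by move: mm_neq0 deg_neq1; rewrite -mdeg_eq0; case: (mdeg mm) => [|[|]].
rewrite memN_msupp_eq0 ?big1 // => [g _|]; last first.
  exact: msize_mdeg_ge (leq_trans size_p deg_ge2).
case: eqP => [mm_eq|_]; last by rewrite mulr0.
by rewrite -mm_eq mdeg1 in deg_neq1.
Qed.

Lemma mmap_msize_le2E (p : {mpoly F[n]}) : (msize p <= 2)%N ->
  phi p = (p@_0%MM)%:MP + \sum_(g : K) p@_(U_(enum_rank g)) *: 'X_[mu g].
Proof.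
move=> /msize_le2E {1}->; rewrite mmapD mmapC raddf_sum /=; congr (_ + _).
apply: eq_bigr => g _.
by rewrite mmapZ mmapX mmap1U enum_rankK imgE mul_mpolyC.
Qed.

Lemma mmap_kernel_le2P (p : {mpoly F[n]}) : (msize p <= 2)%N ->
  phi p = 0 <->
  p@_0%MM = 0 /\ forall g, \sum_(g' | mu g' == mu g) p@_(U_(enum_rank g')) = 0.
Proof.
move=> /mmap_msize_le2E ->; set c := fun g => p@_(U_(enum_rank g)).
have coeff_mu g : (\sum_(g' : K) c g' *: 'X_[mu g'] : {mpoly F[k]})@_(mu g)
                  = \sum_(g' | mu g' == mu g) c g'.
  rewrite raddf_sum /= [RHS]big_mkcond; apply: eq_bigr => g' _.
  by rewrite mcoeffZ mcoeffX; case: eqP; rewrite ?mulr1 ?mulr0.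
have coeff0 : (\sum_(g' : K) c g' *: 'X_[mu g'] : {mpoly F[k]})@_0%MM = 0.
  rewrite raddf_sum /= big1 // => g' _.
  by rewrite mcoeffZ mcoeffX (negbTE (mu_neq0 g')) mulr0.
split=> [phi_p0|[-> fibre0]].
  have := congr1 (mcoeff 0%MM) phi_p0.
  rewrite mcoeffD mcoeffC eqxx mulr1 coeff0 addr0 mcoeff0 => ->.
  split=> // g; have := congr1 (mcoeff (mu g)) phi_p0.
  by rewrite mcoeffD mcoeffC (negbTE (mu_neq0 g)) mulr0 add0r coeff_mu mcoeff0.
rewrite add0r; apply/mpolyP => mm; rewrite mcoeff0.
have [g mmE|no_g] := pickP (fun g => mu g == mm).
  by rewrite -(eqP mmE) coeff_mu fibre0.
rewrite raddf_sum /= big1 // => g _.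
by rewrite mcoeffZ mcoeffX no_g mulr0.
Qed.

Definition fibre_repr (g : K) : K := odflt g [pick g' | mu g' == mu g].

Lemma mu_fibre_repr g : mu (fibre_repr g) = mu g.
Proof. by rewrite /fibre_repr; case: pickP => [g' /eqP|]. Qed.

Lemma eq_fibre_repr g g' : (fibre_repr g == fibre_repr g') = (mu g == mu g').
Proof.
apply/eqP/eqP => [repr_eq|mu_eq].
  by rewrite -mu_fibre_repr repr_eq mu_fibre_repr.
rewrite /fibre_repr; have -> : [pick x | mu x == mu g] = [pick x | mu x == mu g'].
  by apply: eq_pick => x; rewrite mu_eq.
by case: pickP => // /(_ g'); rewrite eqxx.
Qed.

Lemma sum_fibre_repr (M : lmodType F) (c : K -> F) (v : K -> M) :
    (forall g, \sum_(g' | mu g' == mu g) c g' = 0) ->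
  \sum_(g : K) c g *: v (fibre_repr g) = 0.
Proof.
move=> fibre0; rewrite (partition_big fibre_repr predT) //=.
apply: big1 => h _; rewrite (eq_bigr (fun g => c g *: v h)); last by move=> g /eqP ->.
rewrite -scaler_suml.
have [g1 /eqP <-|no_g] := pickP (fun g => fibre_repr g == h); last first.
  by rewrite big_pred0 ?scale0r.
rewrite (eq_bigl (fun g => mu g == mu g1)) ?fibre0 ?scale0r // => g.
by rewrite eq_fibre_repr.
Qed.

Lemma msize_sum_diffX (c : K -> K -> F) (P : K -> K -> bool) :
  (msize (\sum_(g : K) \sum_(g' | P g g') c g g' *: (X g - X g')) <= 2)%N.
Proof.
pose le2 (q : {mpoly F[n]}) := (msize q <= 2)%N.
have le2D r s : le2 r -> le2 s -> le2 (r + s).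
  by rewrite /le2 => r2 s2; rewrite (leq_trans (msizeD_le _ _)) // geq_max r2 s2.
apply: (big_ind le2) => // [|g _]; first by rewrite /le2 msize0.
apply: (big_ind le2) => // [|g' _]; first by rewrite /le2 msize0.
rewrite /le2 (leq_trans (msizeZ_le _ _)) // (leq_trans (msizeD_le _ _)) //.
by rewrite msizeN !msizeX !mdeg1.
Qed.

Lemma mmap_kernel_linearP (p : {mpoly F[n]}) :
  (msize p <= 2)%N /\ phi p = 0 <->
  exists c : K -> K -> F,
    p = \sum_(g : K) \sum_(g' | mu g == mu g') c g g' *: (X g - X g').
Proof.
split=> [[size_p /(mmap_kernel_le2P size_p) [p0 fibre0]]|[c ->]].
  pose c g := p@_(U_(enum_rank g)).
  exists (fun g g' => if g' == fibre_repr g then c g else 0).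
  rewrite {1}(msize_le2E size_p) p0 add0r.
  have -> : \sum_(g : K) c g *: X g
            = \sum_(g : K) c g *: (X g - X (fibre_repr g)).
    under [RHS]eq_bigr => g _ do rewrite scalerBr.
    by rewrite sumrB (sum_fibre_repr (fun g => X g) fibre0) subr0.
  apply: eq_bigr => g _.
  rewrite (bigD1 (fibre_repr g)) /= ?mu_fibre_repr // eqxx big1 ?addr0 // => g'.
  by case/andP=> _ /negbTE ->; rewrite scale0r.
split; first exact: msize_sum_diffX.
rewrite raddf_sum /=; apply: big1 => g _.
rewrite raddf_sum /=; apply: big1 => g' /eqP mu_eq.
by rewrite mmapZ mmapB !mmapX !mmap1U !enum_rankK !imgE mu_eq subrr mulr0.
Qed.

End MonomialMapKernel.

Section TreeMonomials.

Variables (V : finType) (rho : V) (par : V -> V) (m : nat) (leaf : 'I_m -> V).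
Variables (G : finZmodType) (Lab : finType) (L : G -> Lab).

Local Notation A := (aidx rho Lab).

Definition qmonomial (g : qidx m G) : 'X_{1.. #|{: A}|} :=
  (\sum_(e : tedge rho) U_(enum_rank ((e, L (hg par leaf g e)) : A)))%MM.

Lemma qimageE (F : fieldType) g : qimage F rho par leaf L g = 'X_[qmonomial g].
Proof.
rewrite /qimage /qmonomial; symmetry.
by apply: (big_morph (fun mm => 'X_[mm])) => [mm mm'|]; rewrite ?mpolyXD ?mpolyX0.
Qed.

Lemma qmonomialE g e l :
  qmonomial g (enum_rank ((e, l) : A)) = (L (hg par leaf g e) == l) :> nat.
Proof.
rewrite /qmonomial mnm_sumE (bigD1 e) //= mnm1E (inj_eq enum_rank_inj) big1 ?addn0.
  by rewrite xpair_eqE eqxx.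
move=> e' ne_e'.
by rewrite mnm1E (inj_eq enum_rank_inj) xpair_eqE (negbTE ne_e').
Qed.

Lemma tree_edge_exists : is_tree_with_root_edge rho par -> (0 < #|{: tedge rho}|)%N.
Proof.
case=> _ _ root_deg1.
have : (0 < #|[set v | (v != rho) && (par v == rho)]|)%N by rewrite root_deg1.
case/card_gt0P => v; rewrite inE => /andP [v_neq_rho _].
by apply/card_gt0P; exists (exist _ v v_neq_rho).
Qed.

Lemma qmonomial_neq0 g : (0 < #|{: tedge rho}|)%N -> qmonomial g != 0%MM.
Proof.
case/card_gt0P => e _; apply/eqP => /mnmP.
by move=> /(_ (enum_rank ((e, L (hg par leaf g e)) : A))); rewrite qmonomialE eqxx mnm0E.
Qed.

Lemma same_labelsE g g' :
  same_labels rho par leaf L g g' = (qmonomial g == qmonomial g').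
Proof.
apply/forallP/eqP => [same_lab|mono_eq e].
  by apply: eq_bigr => e _; rewrite (eqP (same_lab e)).
have := qmonomialE g' e (L (hg par leaf g e)).
by rewrite -mono_eq qmonomialE eqxx eq_sym; case: eqP.
Qed.

End TreeMonomials.

Theorem proposition3p1 (F : fieldType) (V : finType) (rho : V) (par : V -> V)
    (Htree : is_tree_with_root_edge rho par)
    (m : nat) (leaf : 'I_m -> V) (Hleaf : leaf_labeling rho par leaf)
    (G : finZmodType) (Lab : finType) (L : G -> Lab)
    (p : {mpoly F[#|{: qidx m G}|]}) :
  (msize p <= 2)%N /\ phiTL F rho par leaf L p = 0
  <->
  exists c : qidx m G -> qidx m G -> F,
    p = \sum_(g : qidx m G) \sum_(g' : qidx m G | same_labels rho par leaf L g g')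
          c g g' *: (qvar F g - qvar F g').
Proof.
have mono_neq0 g := qmonomial_neq0 par leaf L g (tree_edge_exists Htree).
rewrite /phiTL (mmap_kernel_linearP (qimageE rho par leaf L F) mono_neq0 p).
by split=> -[c p_eq]; exists c; rewrite p_eq; apply: eq_bigr => g _;
  apply: eq_bigl => g'; rewrite same_labelsE.
Qed.
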